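(* Let $t$ be a normal term, $y$ a $\lambda$-variable with $y\notin Fv(t)$, $a$ a $\mu$-variable, $\sigma=[a:=^*y]$, and $A,B,C$ types. If $\Gamma,y:A\vdash t\sigma:B;\Delta,a:C$, then $\Gamma\vdash t:B;\Delta,a:A\to C$.
   Context: $\lambda\mu$-terms: $t::= x\mid \lambda x.t\mid (t\;t)\mid \mu a.t\mid (a\;t)$ over disjoint infinite sets of $\lambda$-variables and $\mu$-variables; $Fv(t)$ is the set of free variables; a term is normal if it has no redex of the forms $(\lambda x.u\;v)$ or $(\mu b.u\;v)$. $t[a:=^*y]$ is obtained from $t$ by replacing inductively each subterm $(a\;w)$ by $(a\;(w\;y))$. Types are built from propositional variables and $\perp$ with $\to$. Typing rules for $\Gamma\vdash t:A;\Delta$: (ax) $\Gamma\vdash x:A;\Delta$ if $x:A\in\Gamma$; ($\to_i$) from $\Gamma,x:A\vdash t:B;\Delta$ infer $\Gamma\vdash\lambda x.t:A\to B;\Delta$; ($\to_e$) from $\Gamma\vdash u:A\to B;\Delta$, $\Gamma\vdash v:A;\Delta$ infer $\Gamma\vdash(u\;v):B;\Delta$; ($\mu$) from $\Gamma\vdash t:\perp;\Delta,b:A$ infer $\Gamma\vdash\mu b.t:A;\Delta$; ($\perp$) from $\Gamma\vdash t:A;\Delta,b:A$ infer $\Gamma\vdash(b\;t):\perp;\Delta,b:A$. *)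

From Stdlib Require Import Arith.

(* lambda-variables and mu-variables are both represented by nat, but live in
   different syntactic positions, so the two sets are disjoint. *)
Inductive term : Type :=
| Var   (x : nat)
| Lam   (x : nat) (t : term)
| App   (t u : term)
| Mu    (a : nat) (t : term)
| Named (a : nat) (t : term).    (* (a t)      *)

Inductive ty : Type :=
| TVar (n : nat)
| Bot
| Arr (A B : ty).

Fixpoint lfree (x : nat) (t : term) : Prop :=
  match t with
  | Var z => x = z
  | Lam z u => x <> z /\ lfree x u
  | App u v => lfree x u \/ lfree x v
  | Mu _ u => lfree x u
  | Named _ u => lfree x u
  end.

Fixpoint lbound (x : nat) (t : term) : Prop :=
  match t with
  | Var _ => False
  | Lam z u => x = z \/ lbound x u
  | App u v => lbound x u \/ lbound x v
  | Mu _ u => lbound x u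
  | Named _ u => lbound x u
  end.

Fixpoint normal (t : term) : Prop :=
  match t with
  | Var _ => True
  | Lam _ u => normal u
  | App u v =>
      normal u /\ normal v /\
      match u with Lam _ _ => False | Mu _ _ => False | _ => True end
  | Mu _ u => normal u
  | Named _ u => normal u
  end.

Fixpoint subst_star (a y : nat) (t : term) : term :=
  match t with
  | Var z => Var z
  | Lam z u => Lam z (subst_star a y u)
  | App u v => App (subst_star a y u) (subst_star a y v)
  | Mu b u => if Nat.eqb b a then Mu b u else Mu b (subst_star a y u)
  | Named b w =>
      if Nat.eqb b a then Named b (App (subst_star a y w) (Var y))
      else Named b (subst_star a y w)
  end.

Definition ctx := nat -> option ty.
Definition extend (G : ctx) (x : nat) (A : ty) : ctx :=
  fun z => if Nat.eqb z x then Some A else G z.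

(* typing G t A D  stands for  G |- t : A ; D *)
Inductive typing : ctx -> term -> ty -> ctx -> Prop :=
| ty_ax : forall G D x A, G x = Some A -> typing G (Var x) A D
| ty_lam : forall G D x t A B,
    typing (extend G x A) t B D -> typing G (Lam x t) (Arr A B) D
| ty_app : forall G D u v A B,
    typing G u (Arr A B) D -> typing G v A D -> typing G (App u v) B D
| ty_mu : forall G D b t A,
    typing G t Bot (extend D b A) -> typing G (Mu b t) A D
| ty_bot : forall G D b t A,
    D b = Some A -> typing G t A D -> typing G (Named b t) Bot D.

From Stdlib Require Import Arith.

(* Typing is syntax-directed, so a derivation for [t[a:=*y]] is a derivation for [t] in which
   every [(a w)] has been replaced by [(a (w y))]; inverting the typing of each such application
   shows that [w : A -> C] whenever [a : C] and [y : A]. Since [y] is neither free nor bound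
   in [t], its declaration can be dropped everywhere else. *)

Lemma extend_same (G : ctx) (x : nat) (A : ty) : extend G x A x = Some A.
Proof. unfold extend. now rewrite Nat.eqb_refl. Qed.

Lemma extend_other (G : ctx) (x z : nat) (A : ty) : z <> x -> extend G x A z = G z.
Proof. intros Hzx. unfold extend. now destruct (Nat.eqb_spec z x). Qed.

Lemma extend_shadow (G : ctx) (x : nat) (A B : ty) (z : nat) :
  extend (extend G x A) x B z = extend G x B z.
Proof. unfold extend. now destruct (Nat.eqb_spec z x). Qed.

Lemma extend_swap (G : ctx) (x y : nat) (A B : ty) (z : nat) :
  x <> y -> extend (extend G x A) y B z = extend (extend G y B) x A z.
Proof.
  intros Hxy. unfold extend.
  destruct (Nat.eqb_spec z y), (Nat.eqb_spec z x); congruence.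
Qed.

Lemma typing_ctx_agree G t B D :
  typing G t B D ->
  forall G' D', (forall x, lfree x t -> G x = G' x) -> (forall b, D b = D' b) ->
  typing G' t B D'.
Proof.
  induction 1 as [G D x A Hx | G D x t A B _ IH | G D u v A B _ IHu _ IHv
                 | G D b t A _ IH | G D b t A Hb _ IH];
    intros G' D' HG HD; simpl in HG.
  - constructor. now rewrite <- HG.
  - constructor. apply IH; [|assumption].
    intros z Hz. unfold extend. destruct (Nat.eqb_spec z x); auto.
  - apply ty_app with A; [apply IHu | apply IHv]; auto.
  - constructor. apply IH; [assumption|].
    intros z. unfold extend. now destruct (Nat.eqb z b).
  - apply ty_bot with A; [now rewrite <- HD | auto].
Qed.

Lemma typing_drop_lvar G y A t B D :
  ~ lfree y t -> typing (extend G y A) t B D -> typing G t B D.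
Proof.
  intros Hy Ht. apply (typing_ctx_agree _ _ _ _ Ht); [|reflexivity].
  intros z Hz. apply extend_other. intros ->. contradiction.
Qed.

Lemma typing_subst_star_inv (t : term) (y a : nat) (A : ty) :
  forall B C G D, ~ lfree y t -> ~ lbound y t ->
    typing (extend G y A) (subst_star a y t) B (extend D a C) ->
    typing G t B (extend D a (Arr A C)).
Proof.
  induction t as [x | x t IH | u IHu v IHv | b t IH | b t IH];
    simpl; intros B C G D Hfree Hbound H.
  - inversion H as [? ? ? ? Hx| | | |]; subst. constructor.
    rewrite extend_other in Hx; [exact Hx | congruence].
  - inversion H as [| ? ? ? ? ? ? Ht | | |]; subst. constructor.
    apply IH; [tauto | tauto |].
    apply (typing_ctx_agree _ _ _ _ Ht); [|reflexivity].
    intros z _. apply extend_swap. intuition.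
  - inversion H as [| | ? ? ? ? A1 ? Hu Hv | |]; subst.
    apply ty_app with A1; [apply IHu | apply IHv]; tauto.
  - destruct (Nat.eqb_spec b a) as [-> | Hba].
    + inversion H as [| | | ? ? ? ? ? Ht |]; subst. constructor.
      apply typing_drop_lvar with y A; [assumption|].
      apply (typing_ctx_agree _ _ _ _ Ht); [reflexivity|].
      intros z. now rewrite !extend_shadow.
    + inversion H as [| | | ? ? ? ? ? Ht |]; subst. constructor.
      apply (typing_ctx_agree G t Bot (extend (extend D b B) a (Arr A C)));
        [| reflexivity | intros z; now apply extend_swap].
      apply IH; [assumption | assumption |].
      apply (typing_ctx_agree _ _ _ _ Ht); [reflexivity|].
      intros z. now apply extend_swap.
  - destruct (Nat.eqb_spec b a) as [-> | Hba].
    + (* [(a t)] became [(a (t[a:=*y] y))], whose typing forces [t[a:=*y] : A -> C] *)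
      inversion H as [| | | | ? ? ? ? C' Ha Happ]; subst.
      rewrite extend_same in Ha. injection Ha as <-.
      inversion Happ as [| | ? ? ? ? ? ? Ht Hy | |]; subst.
      inversion Hy as [? ? ? ? HyA| | | |]; subst.
      rewrite extend_same in HyA. injection HyA as <-.
      apply ty_bot with (Arr A C); [apply extend_same |].
      apply IH; assumption.
    + inversion H as [| | | | ? ? ? ? C' Hb Ht]; subst.
      apply ty_bot with C'.
      * rewrite extend_other in Hb |- *; assumption.
      * apply IH; assumption.
Qed.

Theorem mainTheorem19 :
  forall (t : term) (y a : nat) (A B C : ty) (G D : ctx),
    normal t ->
    ~ lfree y t ->
    ~ lbound y t ->
    typing (extend G y A) (subst_star a y t) B (extend D a C) ->
    typing G t B (extend D a (Arr A C)).
Proof.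
  intros t y a A B C G D _ Hfree Hbound H.
  exact (typing_subst_star_inv t y a A B C G D Hfree Hbound H).
Qed.
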